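(* Let $D=(0,1)$, $\alpha\in(1,2)$, $\delta_0=\arccos(c_0/C_0)$, fix $\delta_1\in(\delta_0,\pi/2)$, and for $t>0$ let $\Gamma^t_{\delta_1}=\Gamma_1\cup\Gamma_2\cup\Gamma_t$ with $\Gamma_1=\{\rho e^{\mathrm{i}\delta_1}:\rho\ge t^{-1}\}$, $\Gamma_2=\{\rho e^{-\mathrm{i}\delta_1}:\rho\ge t^{-1}\}$, $\Gamma_t=\{t^{-1}e^{\mathrm{i}\theta}:\delta_1\le|\theta|\le\pi\}$. Then there is a constant $C>0$, independent of $t$, such that for all $t>0$, all $\varphi\in\widetilde H^{\alpha/2}(D)$ and all $z\in\Gamma^t_{\delta_1}$, $$|z|\,\|\varphi\|_{L^2(D)}^2+\|\varphi\|_{\widetilde H^{\alpha/2}(D)}^2\le C\,\big|z\|\varphi\|_{L^2(D)}^2-A(\varphi,\varphi)\big|.$$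
   Context: For $\gamma>0$, $({}_0I_x^\gamma f)(x)=\frac{1}{\Gamma(\gamma)}\int_0^x(x-t)^{\gamma-1}f(t)\,dt$ and $({}_xI_1^\gamma f)(x)=\frac{1}{\Gamma(\gamma)}\int_x^1(t-x)^{\gamma-1}f(t)\,dt$; for $n-1<\beta<n$, ${}_0^RD_x^\beta u=\frac{d^n}{dx^n}({}_0I_x^{n-\beta}u)$ and ${}_x^RD_1^\beta u=(-1)^n\frac{d^n}{dx^n}({}_xI_1^{n-\beta}u)$ (Riemann–Liouville), extended by continuity. $\widetilde H^s(D)$ is the set of $u\in H^s(D)$ whose zero extension is in $H^s(\mathbb{R})$. The sesquilinear form $A(\varphi,\psi)=-\big({}_0^RD_x^{\alpha/2}\varphi,\ {}_x^RD_1^{\alpha/2}\psi\big)$ on $U=\widetilde H^{\alpha/2}(D)$ is known to satisfy $\Re A(\psi,\psi)\ge c_0\|\psi\|_U^2$ and $|A(\varphi,\psi)|\le C_0\|\varphi\|_U\|\psi\|_U$ for constants $0<c_0\le C_0$. *)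

From HB Require Import structures.
From Stdlib Require Import ClassicalEpsilon.
From mathcomp Require Import all_boot all_order all_algebra.
From mathcomp Require Import all_classical all_reals all_analysis.
From mathcomp Require Import complex.
Set Implicit Arguments. Unset Strict Implicit. Unset Printing Implicit Defensive.
Import Order.TTheory GRing.Theory Num.Theory.
Local Open Scope classical_set_scope.
Local Open Scope ring_scope.

Section FracDefs.
Variable R : realType.
Local Notation mu := (@lebesgue_measure R).

Definition Dset : set R := `]0, 1[.

(** Complex-valued functions on the real line (elements of H~^s(D) are
    represented by their zero extension to R). *)

Definition csq (w : R[i]) : R := complex.Re w ^+ 2 + complex.Im w ^+ 2.

Definition cmeasurable (f : R -> R[i]) : Prop :=
  measurable_fun setT (fun x => complex.Re (f x)) /\ measurable_fun setT (fun x => complex.Im (f x)).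

Definition cint (A : set R) (f : R -> R[i]) : R[i] :=
  Complex (Rintegral mu A (fun x => complex.Re (f x))) (Rintegral mu A (fun x => complex.Im (f x))).

Definition L2energy (A : set R) (f : R -> R[i]) : \bar R :=
  (\int[mu]_(x in A) (csq (f x))%:E)%E.

Definition gagliardo (s : R) (u : R -> R[i]) : \bar R :=
  (\int[mu]_(x in setT) \int[mu]_(y in setT)
     (csq (u x - u y) / (`|x - y| `^ (1 + 2 * s)))%:E)%E.

Definition Htilde (s : R) (u : R -> R[i]) : Prop :=
  [/\ cmeasurable u,
      (forall x, ~ (0 < x < 1) -> u x = 0),
      (L2energy setT u < +oo)%E &
      (gagliardo s u < +oo)%E].

(* ||u||^2_{H~^s(D)} := ||u~||^2_{H^s(R)} (Slobodeckij norm) *)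
Definition Hnorm2 (s : R) (u : R -> R[i]) : R :=
  fine (L2energy setT u + gagliardo s u)%E.

Definition L2norm2 (u : R -> R[i]) : R := fine (L2energy Dset u).

Definition Gammaf (g : R) : R :=
  Rintegral mu `]0, +oo[ (fun t => t `^ (g - 1) * expR (- t)).

Definition RLint_left (g : R) (f : R -> R[i]) (x : R) : R[i] :=
  Complex (Gammaf g)^-1 0 *
  cint `]0, x[ (fun t => Complex ((x - t) `^ (g - 1)) 0 * f t).

Definition RLint_right (g : R) (f : R -> R[i]) (x : R) : R[i] :=
  Complex (Gammaf g)^-1 0 *
  cint `]x, 1[ (fun t => Complex ((t - x) `^ (g - 1)) 0 * f t).

Definition test_fun (psi : R -> R) : Prop :=
  (forall (n : nat) (x : R), derivable (derive1n n psi) x 1) /\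
  exists a b : R, [/\ 0 < a, a < b, b < 1 &
    forall x, x < a \/ b < x -> psi x = 0].

Definition is_wderiv (F g : R -> R[i]) : Prop :=
  [/\ cmeasurable g, (L2energy Dset g < +oo)%E &
      forall psi, test_fun psi ->
        cint Dset (fun x => F x * Complex (derive1 psi x) 0) =
        - cint Dset (fun x => g x * Complex (psi x) 0)].

(* the (chosen) weak derivative on D, 0 if it does not exist *)
Definition wderiv (F : R -> R[i]) : R -> R[i] :=
  epsilon (inhabits (fun _ => 0)) (fun g => is_wderiv F g \/
                                          ((~ exists h, is_wderiv F h) /\ g = fun _ => 0)).

(* Riemann--Liouville derivatives of order beta in (0,1) (n = 1) *)
Definition RLD_left (b : R) (u : R -> R[i]) : R -> R[i] :=
  wderiv (RLint_left (1 - b) u).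

Definition RLD_right (b : R) (u : R -> R[i]) : R -> R[i] :=
  fun x => - wderiv (RLint_right (1 - b) u) x.

Definition Aform (alpha : R) (phi psi : R -> R[i]) : R[i] :=
  - cint Dset (fun x => RLD_left (alpha / 2) phi x *
                           conjc (RLD_right (alpha / 2) psi x)).

Definition contour (delta1 t : R) (z : R[i]) : Prop :=
  (exists rho, t^-1 <= rho /\ z = Complex (rho * cos delta1) (rho * sin delta1)) \/
  (exists rho, t^-1 <= rho /\ z = Complex (rho * cos delta1) (- (rho * sin delta1))) \/
  (exists theta, delta1 <= `|theta| <= pi /\
                 z = Complex (t^-1 * cos theta) (t^-1 * sin theta)).

Definition cabs (z : R[i]) : R := Normc.normc z.

End FracDefs.

(* On the contour, [Re z <= cos delta1 |z|]; coercivity and boundedness put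
   [w = A(phi, phi)] in the sector [(c0 / C0) |w| <= Re w].  Since
   [cos delta1 < c0 / C0], the two sectors are separated by a positive angle, so
   with [l = ||phi||^2_{L^2}] the distance [|z l - w|] dominates a fixed multiple
   of [|z| l + |w|], and [|w| >= c0 ||phi||^2] controls the energy norm. *)

From HB Require Import structures.
From mathcomp Require Import all_boot all_order all_algebra.
From mathcomp Require Import all_classical all_reals all_analysis.
From mathcomp Require Import complex.
From mathcomp Require Import ring lra.
Import Order.TTheory GRing.Theory Num.Theory.
Local Open Scope ring_scope.
Local Open Scope complex_scope.

Import Normc.

Section SectorSeparation.
Context {R : rcfType}.
Implicit Types (u v w : R[i]).

Lemma Re_le_normc w : complex.Re w <= normc w.
Proof.
case: w => a b /=; apply: le_trans (ler_norm a) _.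
by rewrite -sqrtr_sqr ler_sqrt ?lerDl ?sqr_ge0 // addr_ge0 ?sqr_ge0.
Qed.

Lemma normc_ge0 w : 0 <= normc w.
Proof. by case: w => a b; exact: sqrtr_ge0. Qed.

Lemma normc_subr_ge u v : normc u - normc v <= normc (u - v).
Proof. by rewrite lerBlDr -{1}(subrK v u) le_normcD. Qed.

Lemma normc_polar (r c s : R) : 0 <= r -> c ^+ 2 + s ^+ 2 = 1 ->
  normc (Complex (r * c) (r * s)) = r.
Proof.
move=> r_ge0 cs1 /=.
by rewrite !exprMn -mulrDr cs1 mulr1 sqrtr_sqr ger0_norm.
Qed.

Lemma normc_scaler w (l : R) : 0 <= l -> normc (w * l%:C) = normc w * l.
Proof. by move=> l_ge0; rewrite normcM /= expr0n addr0 sqrtr_sqr ger0_norm. Qed.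

Lemma Re_scaler w (l : R) : complex.Re (w * l%:C) = complex.Re w * l.
Proof. by case: w => a b /=; rewrite mulr0 subr0. Qed.

(* If [u] lies in the sector [Re u <= m |u|] and [v] in the narrower sector
   [k |v| <= Re v], then [Re (v - u)] and [|u| - |v|] are both lower bounds of
   [|u - v|]; their combination with weights [k + m] and [2] gives the bound. *)
Lemma normc_sub_sector {m k : R} {u v} :
  0 <= k + m <= 2 -> complex.Re u <= m * normc u -> k * normc v <= complex.Re v ->
  (k - m) * (normc u + normc v) <= 4 * normc (u - v).
Proof.
move=> /andP[km_ge0 km_le2] Re_u Re_v.
have Re_bound : complex.Re v - complex.Re u <= normc (u - v).
  by rewrite -raddfB -normcN opprB Re_le_normc.
have norm_bound := normc_subr_ge u v.
have weighted := ler_wpM2l km_ge0 norm_bound.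
have := normc_ge0 (u - v); nra.
Qed.

Lemma resolvent_sector_bound (m k c0 h : R) u v :
  0 < c0 -> m < k -> 0 <= k + m <= 2 ->
  complex.Re u <= m * normc u -> k * normc v <= complex.Re v -> h <= normc v / c0 ->
  normc u + h <= (1 + c0^-1) * (4 / (k - m)) * normc (u - v).
Proof.
move=> c0_gt0 m_lt_k km_range Re_u Re_v h_le.
have sep := normc_sub_sector km_range Re_u Re_v.
have c0V_ge0 : 0 <= c0^-1 by rewrite invr_ge0 ltW.
have u_ge0 := normc_ge0 u; have v_ge0 := normc_ge0 v.
rewrite -mulrA; apply: le_trans (_ : (1 + c0^-1) * (normc u + normc v) <= _).
  rewrite mulrDl mul1r mulrDr [c0^-1 * normc v]mulrC.
  by have := mulr_ge0 c0V_ge0 u_ge0; lra.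
rewrite ler_wpM2l ?addr_ge0 //.
by rewrite mulrAC ler_pdivlMr ?subr_gt0 // mulrC.
Qed.

End SectorSeparation.

Lemma cos_lt_of_acos_lt (R : realType) (k d : R) :
  -1 <= k <= 1 -> acos k < d <= pi -> cos d < k.
Proof.
move=> k_range /andP[acos_lt d_lepi].
have [/andP[acos_ge0 acos_lepi] cos_acos] := acos_def k_range.
rewrite -cos_acos ltr_cos // in_itv /= ?acos_ge0 ?acos_lepi ?d_lepi ?andbT //.
exact: le_trans (ltW acos_lt).
Qed.

Lemma contour_Re_le (R : realType) (delta1 t : R) (z : R[i]) :
  0 < t -> 0 <= delta1 <= pi ->
  contour delta1 t z -> complex.Re z <= cos delta1 * normc z.
Proof.
move=> t_gt0 /andP[d_ge0 d_lepi].
have t1_ge0 : 0 <= t^-1 by rewrite invr_ge0 ltW.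
case=> [[rho [rho_ge ->]]|[[rho [rho_ge ->]]|[th [/andP[th_ge th_le] ->]]]].
- by rewrite normc_polar ?cos2Dsin2 ?(le_trans t1_ge0) //= mulrC.
- rewrite -mulrN normc_polar ?sqrrN ?cos2Dsin2 ?(le_trans t1_ge0) //=.
  by rewrite mulrC.
- rewrite normc_polar ?cos2Dsin2 //= mulrC ler_wpM2r //.
  have -> : cos th = cos `|th|.
    by case: (lerP 0 th) => h; [rewrite ger0_norm | rewrite ltr0_norm ?cosN].
  have [<-//|d_ne] := eqVneq delta1 `|th|.
  have d_lt : delta1 < `|th| by rewrite lt_def eq_sym d_ne th_ge.
  by apply: ltW; rewrite ltr_cos // in_itv /= ?d_ge0 ?d_lepi ?normr_ge0 ?th_le.
Qed.

Lemma L2energy_ge0 {R : realType} (A : set R) (u : R -> R[i]) :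
  (0 <= L2energy A u)%E.
Proof.
by apply: integral_ge0 => x _; rewrite lee_fin addr_ge0 ?sqr_ge0.
Qed.

Lemma gagliardo_ge0 {R : realType} (s : R) (u : R -> R[i]) :
  (0 <= gagliardo s u)%E.
Proof.
apply: integral_ge0 => x _; apply: integral_ge0 => y _.
by rewrite lee_fin divr_ge0 ?powR_ge0 ?addr_ge0 ?sqr_ge0.
Qed.

Lemma L2norm2_ge0 {R : realType} (u : R -> R[i]) : 0 <= L2norm2 u.
Proof. exact/fine_ge0/L2energy_ge0. Qed.

Lemma Hnorm2_ge0 {R : realType} (s : R) (u : R -> R[i]) : 0 <= Hnorm2 s u.
Proof. by apply/fine_ge0/adde_ge0; [apply: L2energy_ge0 | apply: gagliardo_ge0]. Qed.

Section Coercivity.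
Context {R : rcfType} {c0 C0 h : R} {a : R[i]}.
Hypotheses (c0_gt0 : 0 < c0) (c0_le_C0 : c0 <= C0).
Hypotheses (coercive : c0 * h <= complex.Re a) (bounded : normc a <= C0 * h).

Lemma coercive_Re_ge : c0 / C0 * normc a <= complex.Re a.
Proof.
have C0_gt0 : 0 < C0 by apply: lt_le_trans c0_le_C0.
apply: le_trans coercive; rewrite -mulrA ler_wpM2l ?(ltW c0_gt0) //.
by rewrite ler_pdivrMl.
Qed.

Lemma coercive_norm_le : h <= normc a / c0.
Proof.
by rewrite ler_pdivlMr // mulrC (le_trans coercive) ?Re_le_normc.
Qed.

End Coercivity.

Theorem lemma4p4 (R : realType) (alpha c0 C0 delta1 : R) :
  1 < alpha < 2 ->
  0 < c0 -> c0 <= C0 ->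
  (forall psi : R -> R[i], Htilde (alpha / 2) psi ->
     c0 * Hnorm2 (alpha / 2) psi <= complex.Re (Aform alpha psi psi)) ->
  (forall phi psi : R -> R[i], Htilde (alpha / 2) phi -> Htilde (alpha / 2) psi ->
     cabs (Aform alpha phi psi) <=
       C0 * Num.sqrt (Hnorm2 (alpha / 2) phi) * Num.sqrt (Hnorm2 (alpha / 2) psi)) ->
  acos (c0 / C0) < delta1 < pi / 2 ->
  exists C : R, 0 < C /\
    forall t : R, 0 < t ->
    forall phi : R -> R[i], Htilde (alpha / 2) phi ->
    forall z : R[i], contour delta1 t z ->
      cabs z * L2norm2 phi + Hnorm2 (alpha / 2) phi <=
        C * cabs (z * Complex (L2norm2 phi) 0 - Aform alpha phi phi).
Proof.
move=> _ c0_gt0 c0_le_C0 coercive bounded /andP[delta0_lt delta1_lt].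
have C0_gt0 : 0 < C0 by apply: lt_le_trans c0_le_C0.
set k := c0 / C0; set m := cos delta1.
have k_gt0 : 0 < k by apply: divr_gt0.
have k_le1 : k <= 1 by rewrite ler_pdivrMr // mul1r.
have k_range : -1 <= k <= 1 by apply/andP; split; lra.
have acos_k_ge0 := acos_ge0 k_range.
have pi_gt0 := pi_gt0 R.
have m_ge0 : 0 <= m by apply: cos_ge0_pihalf; apply/andP; split; lra.
have m_lt_k : m < k by apply: cos_lt_of_acos_lt => //; apply/andP; split; lra.
have km_range : 0 <= k + m <= 2 by apply/andP; split; lra.
exists ((1 + c0^-1) * (4 / (k - m))); split.
  by rewrite mulr_gt0 ?addr_gt0 ?invr_gt0 ?divr_gt0 ?subr_gt0.
move=> t t_gt0 phi phi_H z z_contour; rewrite /cabs.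
have A_bounded := bounded phi phi phi_H phi_H.
rewrite -mulrA -expr2 sqr_sqrtr ?Hnorm2_ge0 // in A_bounded.
have A_Re := coercive_Re_ge c0_gt0 c0_le_C0 (coercive phi phi_H) A_bounded.
have h_le := coercive_norm_le c0_gt0 (coercive phi phi_H).
have z_Re : complex.Re z <= m * normc z.
  by apply: contour_Re_le z_contour => //; apply/andP; split; lra.
have zl_Re : complex.Re (z * (L2norm2 phi)%:C) <= m * normc (z * (L2norm2 phi)%:C).
  by rewrite normc_scaler ?L2norm2_ge0 // Re_scaler mulrA ler_wpM2r ?L2norm2_ge0.
rewrite -normc_scaler ?L2norm2_ge0 //.
exact: resolvent_sector_bound km_range zl_Re A_Re h_le.
Qed.
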